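(* Let $N\ge 1$, $i\in\langle N\rangle$ and let $u$ be a word over $\langle N\rangle$ with $|u|\ge 2$. Then the antipode $S_{\mathcal L}$ of the left Lagrange Hopf algebra $\mathcal L^N$ satisfies \[ S_{\mathcal L}(Y_u^i)=\sum_{T\in \mathbf{RT}_u^i}(-1)^{\mathbf v(T)}\,\Lambda_{\downarrow\ell}(T). \]
   Context: Let $\langle N\rangle=\{1,\dots,N\}$. For a word $u=u(1)\cdots u(p)$ over $\langle N\rangle$ write $|u|=p$. The interval partition Hopf algebra $\mathcal H=\mathcal H^N$ is, as an algebra, the free unital associative complex algebra on generators $Y_u^i$ ($i\in\langle N\rangle$, $|u|\ge 2$); one sets $Y_j^i=\delta_{ij}1$ for single letters $i,j$. Its counit $\varepsilon$ is the algebra homomorphism with $\varepsilon(Y_u^i)=0$, and its comultiplication is the algebra homomorphism $\Delta:\mathcal H\to\mathcal H\otimes\mathcal H$ with $\Delta(Y_u^i)=\sum_{q=1}^{p}\sum_{(C_1,\dots,C_q)}\sum_{v\in\langle N\rangle^q} Y_{u|C_1}^{v(1)}\cdots Y_{u|C_q}^{v(q)}\otimes Y_v^i$, where $p=|u|$, the middle sum is over all partitions of $\{1,\dots,p\}$ into $q$ nonempty consecutive intervals $C_1<\dots<C_q$, and $u|C_k$ is the subword of $u$ indexed by $C_k$. This is a connected graded bialgebra and has an invertible antipode $S_{\mathcal H}$. The left Lagrange Hopf algebra $\mathcal L^N$ is $\mathcal H$ with the same multiplication and counit, the opposite comultiplication $\Delta^{op}=\tau\circ\Delta$ ($\tau$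 the flip), and antipode $S_{\mathcal L}=S_{\mathcal H}^{-1}$. Trees: a colored planar tree is a finite rooted tree in which the children of each vertex are linearly ordered (left to right) and each vertex $x$ has a color $c(x)\in\langle N\rangle$; trees are taken up to isomorphism preserving root, child orders and colors. A leaf is a vertex with no children. A tree is reduced if every non-leaf vertex has at least two children. $\mathbf{RT}_u^i$ is the set of reduced colored planar trees whose root has color $i$ and whose leaves, read from left to right, have colors $u(1),\dots,u(p)$. For a non-leaf vertex $x$ with children $y_1<\dots<y_k$ put $Y(x)=Y^{c(x)}_{c(y_1)\cdots c(y_k)}\in\mathcal H$. $\mathbf v(T)$ is the number of non-leaf vertices of $T$. $\Lambda_{\downarrow\ell}(T)=Y(x_1)\cdots Y(x_r)$ where $x_1,\dots,x_r$ are the non-leaf vertices of $T$ listed in preorder with children visited from right to left (the root first; after a vertex, the subtrees of its children are traversed from the rightmost child to the leftmost child). (In the paper this is the descending left depth-first order.) *)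

From HB Require Import structures.
From mathcomp Require Import all_boot all_order all_algebra.
From mathcomp Require Import reals.
From mathcomp Require Import complex.
From Stdlib Require List.

Set Implicit Arguments.
Unset Strict Implicit.
Unset Printing Implicit Defensive.
Import GRing.Theory Num.Theory.
Local Open Scope ring_scope.

Section IntervalPartitionHopf.
Variable N : nat.
Variable K : comPzRingType.

(* Generators Y_u^i with i a color and u a word of length >= 2.
   Colors <N> = {1..N} are represented by 'I_N. *)
Definition gen := {x : 'I_N * seq 'I_N | (1 < size x.2)%N}.

Definition monomial := seq gen.

(* Elements of H are represented by their coefficient functions on monomials
   (only finitely supported ones are genuine elements, but the product below is
   well defined for all coefficient functions, since a word has finitely many
   factorizations). *)
Definition Hel := monomial -> K.

Definition Hone : Hel := fun w => (w == [::])%:R.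
Definition Hmono (m : monomial) : Hel := fun w => (w == m)%:R.
Definition Hmul (f g : Hel) : Hel :=
  fun w => \sum_(k < (size w).+1) f (take k w) * g (drop k w).

Definition ET := seq (K * monomial).
Definition ETval (l : ET) : Hel := fun w => \sum_(x <- l) x.1 * (x.2 == w)%:R.
Definition ETmul (a b : ET) : ET := [seq (x.1 * y.1, x.2 ++ y.2) | x <- a, y <- b].
Definition ETprod (l : seq ET) : ET := foldr ETmul [:: (1, [::])] l.

(* Y_u^i as an element of H: the generator if |u| >= 2, delta_{ij} 1 if u = j
   is a single letter (and 0 for the empty word, which never occurs). *)
Definition Yterms (i : 'I_N) (u : seq 'I_N) : ET :=
  match insub (i, u) : option gen with
  | Some g => [:: (1, [:: g])]
  | None => if u == [:: i] then [:: (1, [::])] else [::]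
  end.

(* All partitions of the positions of u into nonempty consecutive intervals
   C_1 < ... < C_q, given by the list of subwords [u|C_1; ...; u|C_q]. *)
Fixpoint interval_partitions (T : Type) (u : seq T) : seq (seq (seq T)) :=
  match u with
  | [::] => [:: [::]]
  | x :: u' =>
      flatten [seq match bs with
                   | [::] => [:: [:: [:: x]]]
                   | b :: bs' => [:: [:: x] :: b :: bs'; (x :: b) :: bs']
                   end | bs <- interval_partitions u']
  end.

Definition TT := seq (K * monomial * monomial).
Definition TTmul (s t : TT) : TT :=
  [seq (x.1.1 * y.1.1, x.1.2 ++ y.1.2, x.2 ++ y.2) | x <- s, y <- t].

(* Delta(Y_u^i) = sum_q sum_{(C_1..C_q)} sum_{v in <N>^q}
                  Y_{u|C_1}^{v(1)} ... Y_{u|C_q}^{v(q)} (x) Y_v^i *)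
Definition Delta_gen (g : gen) : TT :=
  let i := (val g).1 in let u := (val g).2 in
  flatten [seq
    flatten [seq [seq (x.1 * y.1, x.2, y.2)
                 | x <- ETprod [seq Yterms p.1 p.2 | p <- zip (val v) bs],
                   y <- Yterms i (val v)]
            | v : (size bs).-tuple 'I_N]
  | bs <- interval_partitions u].

Definition Delta (m : monomial) : TT := foldr TTmul [:: (1, [::], [::])] (map Delta_gen m).

Definition eps (m : monomial) : K := (m == [::])%:R.

(* S (given on the monomial basis, extended linearly) is an antipode of the left
   Lagrange Hopf algebra L^N = (H, m, Delta^op, eps): for every monomial m with
   Delta(m) = sum c a (x) b, i.e. Delta^op(m) = sum c b (x) a,
     sum c S(b) a = eps(m) 1 = sum c b S(a). *)
Definition is_antipode_L (S : monomial -> Hel) : Prop :=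
  forall m w,
    \sum_(t <- Delta m) t.1.1 * Hmul (S t.2) (Hmono t.1.2) w = eps m * Hone w /\
    \sum_(t <- Delta m) t.1.1 * Hmul (Hmono t.2) (S t.1.2) w = eps m * Hone w.

(* Colored planar rooted trees: a vertex of color c with an ordered list of
   children. Leibniz equality of terms is isomorphism of colored planar trees. *)
Inductive tree := Node of 'I_N & seq tree.

Definition root_color (t : tree) : 'I_N := let: Node c _ := t in c.

Fixpoint leaves (t : tree) : seq 'I_N :=
  match t with
  | Node c [::] => [:: c]
  | Node _ ts => flatten (map leaves ts)
  end.

Fixpoint reduced (t : tree) : bool :=
  match t with
  | Node _ ts => ((nilp ts) || (1 < size ts)%N) && all reduced ts
  end.

Fixpoint nvert (t : tree) : nat :=
  match t with
  | Node _ [::] => 0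
  | Node _ ts => (sumn (map nvert ts)).+1
  end.

(* Lambda_{down l}(T) = Y(x_1) ... Y(x_r), x_1..x_r the non-leaf vertices in
   preorder, root first, children subtrees traversed from right to left. *)
Fixpoint Lambda (t : tree) : ET :=
  match t with
  | Node _ [::] => [:: (1, [::])]
  | Node c ts => ETmul (Yterms c (map root_color ts)) (ETprod (rev (map Lambda ts)))
  end.

Definition inRT (i : 'I_N) (u : seq 'I_N) (t : tree) : Prop :=
  reduced t /\ root_color t = i /\ leaves t = u.

End IntervalPartitionHopf.

(* The second antipode identity of L^N, sum Y_(2) S(Y_(1)) = eps(Y), determines S
   on monomials: the only term of Delta(m) with right factor 1 is m (x) 1, and all the
   other terms have a left factor of smaller weight sum (|u| - 1).  It therefore suffices
   to exhibit one solution.  Let G(c, u) be the signed tree sum of the statement.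
   Removing the root of a tree of RT_u^c, |u| >= 2, leaves subtrees T_1, ..., T_q with
   q >= 2, whose leaf words form an interval partition of u and whose root colours form
   a word v; as Lambda(T) = Y_v^c Lambda(T_q) ... Lambda(T_1), this gives
     G(c, u) = - sum_(q >= 2) sum_(C_1 < ... < C_q) sum_v
                   Y_v^c G(v(q), u|C_q) ... G(v(1), u|C_1),
   which is precisely the antipode identity on Y_u^c for the anti-multiplicative map
   sending Y_u^c to G(c, u).  Anti-multiplicativity carries the identity over from the
   generators to all monomials. *)

From HB Require Import structures.
From mathcomp Require Import all_boot all_order all_algebra.
From mathcomp Require Import boolp reals complex.
From Stdlib Require List.
Import GRing.Theory Num.Theory.

Set Implicit Arguments.
Unset Strict Implicit.
Unset Printing Implicit Defensive.

Lemma uniq_flatten_map_key (A B C : eqType) (s : seq A) (F : A -> seq B)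
    (h : A -> C) (key : B -> C) :
  uniq (map h s) -> {in s, forall a, uniq (F a)} ->
  {in s, forall a, {in F a, forall z, key z = h a}} ->
  uniq (flatten (map F s)).
Proof.
elim: s => [|a s IHs] //= /andP [h_a_notin uniq_hs] uniqF keyF.
rewrite cat_uniq uniqF ?mem_head //= IHs //; last 2 first.
- by move=> a' a's; apply: uniqF; rewrite inE a's orbT.
- by move=> a' a's; apply: keyF; rewrite inE a's orbT.
rewrite andbT; apply/hasPn => z /flatten_mapP [a' a's zFa']; apply/negP => zFa.
move: h_a_notin; rewrite -(keyF a _ z zFa) ?mem_head //.
by rewrite (keyF a' _ z zFa') ?map_f // inE a's orbT.
Qed.

Lemma mem_zip_r (A B : eqType) (s : seq A) (t : seq B) p : p \in zip s t -> p.2 \in t.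
Proof.
elim: s t => [|a s IHs] [|b t] //=.
by rewrite !inE => /orP [/eqP -> | /IHs ->]; rewrite ?eqxx ?orbT.
Qed.

Lemma size_flatten_ge (T : eqType) (bs : seq (seq T)) :
  all (fun b => b != [::]) bs -> (size bs <= size (flatten bs))%N.
Proof.
elim: bs => [|b bs IHbs] //= /andP [b_nil /IHbs le_bs].
by rewrite size_cat -add1n leq_add // lt0n size_eq0.
Qed.

Lemma size_flatten_gt_mem (T : eqType) (bs : seq (seq T)) b :
  b \in bs -> all (fun b => b != [::]) bs -> (1 < size bs)%N ->
  (size b < size (flatten bs))%N.
Proof.
move=> b_bs bs_nil bs_gt1; have perm_bs := perm_to_rem b_bs.
rewrite (perm_all _ perm_bs) /= in bs_nil; case/andP: bs_nil => _ rem_nil.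
rewrite (perm_size (perm_flatten perm_bs)) /= size_cat -addn1 leq_add2l.
apply: leq_trans (size_flatten_ge rem_nil).
by rewrite size_rem // -ltnS prednK // ltnW.
Qed.

Lemma all2_map_r (A B C : Type) (r : A -> B -> bool) (f : C -> B) s zs :
  all2 r s (map f zs) = all2 (fun a z => r a (f z)) s zs.
Proof. by elim: s zs => [|a s IHs] [|z zs] //=; rewrite IHs. Qed.

Lemma eq_in_all2 (A : Type) (B : eqType) (r1 r2 : A -> B -> bool) s (zs : seq B) :
  (forall a, {in zs, forall z, r1 a z = r2 a z}) -> all2 r1 s zs = all2 r2 s zs.
Proof.
elim: s zs => [|a s IHs] [|z zs] //= eq_r.
by rewrite eq_r ?mem_head // IHs // => a' z' z'zs; apply: eq_r; rewrite inE z'zs orbT.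
Qed.

Lemma flatten_map_nil (A : eqType) (B : Type) (F : A -> seq B) s :
  {in s, forall x, F x = [::]} -> flatten (map F s) = [::].
Proof.
elim: s => [|x s IHs] //= F_nil; rewrite F_nil ?mem_head //= IHs // => y ys.
by apply: F_nil; rewrite inE ys orbT.
Qed.

Lemma flatten_map_only (A : eqType) (B : Type) (F : A -> seq B) s a :
  uniq s -> a \in s -> {in s, forall x, x != a -> F x = [::]} -> flatten (map F s) = F a.
Proof.
elim: s => [|x s IHs] //= /andP [x_s uniq_s] a_xs F_nil.
have F_nil_s : {in s, forall y, y != a -> F y = [::]}.
  by move=> y ys; apply: F_nil; rewrite inE ys orbT.
have [x_a|x_a] := eqVneq x a.
  subst a; rewrite flatten_map_nil ?cats0 // => y ys; apply: F_nil_s => //.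
  by apply: contraNneq x_s => <-.
rewrite F_nil ?mem_head // IHs //.
by move: a_xs; rewrite inE eq_sym (negbTE x_a).
Qed.

Definition cart (A : Type) (Ls : seq (seq A)) : seq (seq A) :=
  foldr (fun L acc => [seq t :: ts | t <- L, ts <- acc]) [:: [::]] Ls.

Lemma mem_cart (A : eqType) (Ls : seq (seq A)) ts :
  (ts \in cart Ls) = all2 (fun t L => t \in L) ts Ls.
Proof.
elim: Ls ts => [|L Ls IHLs] [|t ts] //=; first by apply/allpairsP => -[p [_ _]].
apply/allpairsP/andP => [[[t' ts'] [t'L ts'Ls [-> ->]]]|[tL tsLs]].
  by rewrite -IHLs.
by exists (t, ts); rewrite IHLs.
Qed.

Lemma cart_uniq (A : eqType) (Ls : seq (seq A)) : all uniq Ls -> uniq (cart Ls).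
Proof.
elim: Ls => [|L Ls IHLs] //= /andP [uniqL /IHLs uniq_cart].
by apply: allpairs_uniq => // -[t ts] [t' ts'] _ _ [-> ->].
Qed.

(** * Interval partitions *)

Section IntervalPartitions.
Variable T : eqType.
Implicit Types (u : seq T) (bs : seq (seq T)).

Lemma mem_interval_partitions u bs :
  (bs \in interval_partitions u) = (flatten bs == u) && all (fun b => b != [::]) bs.
Proof.
elim: u bs => [|x u IHu] bs /=.
  by rewrite inE; case: bs => [|[|y b] bs]; rewrite ?andbF.
apply/flatten_mapP/andP => [[bs' bs'P]|[/eqP flat_bs bs_nil]].
  move: bs'P; rewrite IHu => /andP [/eqP <- bs'_nil].
  case: bs' bs'_nil => [|b bs'] /=; first by rewrite inE => _ /eqP ->.
  case/andP=> b_nil bs'_nil; rewrite !inE => /orP [] /eqP -> /=.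
    by rewrite b_nil bs'_nil.
  by rewrite ?bs'_nil ?andbT; case: b b_nil.
case: bs flat_bs bs_nil => [|[|y b] bs] //= [<- flat_bs] bs_nil.
case: b flat_bs => [|z b] /= flat_bs.
  exists bs; first by rewrite IHu flat_bs eqxx.
  by case: bs {flat_bs bs_nil} => [|b' bs]; rewrite !inE ?eqxx ?orbT.
exists ((z :: b) :: bs); first by rewrite IHu /= flat_bs eqxx.
by rewrite !inE eqxx orbT.
Qed.

Lemma size_block_lt u bs b :
  bs \in interval_partitions u -> (1 < size bs)%N -> b \in bs -> (size b < size u)%N.
Proof.
rewrite mem_interval_partitions => /andP [/eqP <- bs_nil] bs_gt1 b_bs.
exact: size_flatten_gt_mem.
Qed.

(* Undoes the step that builds the partitions of x :: u from those of u. *)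
Definition behead_partition bs : seq (seq T) :=
  if bs is (_ :: b) :: bs' then (if b is [::] then bs' else b :: bs') else [::].

Lemma interval_partitions_uniq u : uniq (interval_partitions u).
Proof.
elim: u => [|x u IHu] //=.
apply: (@uniq_flatten_map_key _ _ _ _ _ id behead_partition); rewrite ?map_id //.
  move=> [|b bs] bsP //=; rewrite andbT inE.
  move: bsP; rewrite mem_interval_partitions /= => /and3P [_ b_nil _].
  by case: b b_nil => // y b _; rewrite !eqseq_cons eqxx.
move=> [|b bs] bsP; first by move=> z; rewrite inE => /eqP ->.
move: bsP; rewrite mem_interval_partitions /= => /and3P [_ b_nil _] z.
by rewrite !inE => /orP [] /eqP -> //=; case: b b_nil.
Qed.

Lemma interval_partitions_single u : u != [::] ->
  [seq bs <- interval_partitions u | ~~ (1 < size bs)%N] = [:: [:: u]].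
Proof.
move=> u_nil; apply: perm_small_eq => //.
apply: uniq_perm; rewrite ?filter_uniq ?interval_partitions_uniq // => bs.
rewrite mem_filter mem_interval_partitions inE.
case: bs => [|b [|b' bs]] /=; last by rewrite eqseq_cons andbF.
  by rewrite eq_sym (negbTE u_nil).
by rewrite cats0 eqseq_cons andbT; case: eqP => [->|] //=; rewrite u_nil.
Qed.

End IntervalPartitions.

(** * Reduced trees *)

Fixpoint tree_ind_forall (N : nat) (P : tree N -> Prop)
    (IH : forall c ts, List.Forall P ts -> P (Node c ts)) (t : tree N) : P t :=
  let: Node c ts := t in
  IH c ts ((fix all_P ts : List.Forall P ts :=
              if ts is t' :: ts' then List.Forall_cons t' (tree_ind_forall IH t') (all_P ts')
              else List.Forall_nil P) ts).

Fixpoint gentree_of_tree (N : nat) (t : tree N) : GenTree.tree 'I_N :=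
  let: Node c ts := t in GenTree.Node 0 (GenTree.Leaf c :: map (@gentree_of_tree N) ts).

Lemma gentree_of_tree_inj N : injective (@gentree_of_tree N).
Proof.
elim/tree_ind_forall=> c ts IHts [c' ts'] /= [-> eq_ts]; congr Node.
elim: ts ts' IHts eq_ts => [|t ts IHts] [|t' ts'] //= /List.Forall_cons_iff [IHt /IHts IH].
by case=> /IHt -> /IH ->.
Qed.

HB.instance Definition _ (N : nat) :=
  Equality.copy (tree N) (inj_type (@gentree_of_tree_inj N)).

Section ReducedTrees.
Variable N : nat.
Local Notation tree := (tree N).
Implicit Types (c : 'I_N) (u : seq 'I_N) (t : tree) (ts : seq tree).

Definition inRTb c u t : bool := [&& reduced t, root_color t == c & leaves t == u].

Lemma inRTbP c u t : reflect (inRT c u t) (inRTb c u t).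
Proof. by apply: (iffP and3P) => [[? /eqP ? /eqP ?]|[? [-> ->]]]. Qed.

Lemma leaves_nil t : leaves t != [::].
Proof.
elim/tree_ind_forall: t => c [|t ts] //= /List.Forall_cons_iff [].
by case: (leaves t).
Qed.

Lemma leaves_nil_all ts : all (fun b => b != [::]) (map (@leaves N) ts).
Proof. by rewrite all_map; apply/allP => t _; apply: leaves_nil. Qed.

Lemma inRTb_leaf c c' u : inRTb c u (Node c' [::]) = (c' == c) && (u == [:: c']).
Proof. by rewrite /inRTb /= [u == _]eq_sym. Qed.

Lemma inRTb_node c c' u t ts :
  inRTb c u (Node c' (t :: ts)) =
  [&& c' == c, 1 < size (t :: ts), all (@reduced N) (t :: ts) &
      flatten (map (@leaves N) (t :: ts)) == u].
Proof. by rewrite /inRTb /= -!andbA; do !bool_congr. Qed.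

Lemma all2_inRTb_zip ts (v : seq 'I_N) bs : size v = size bs ->
  all2 (fun t p => inRTb p.1 p.2 t) ts (zip v bs) =
  [&& map (@root_color N) ts == v, map (@leaves N) ts == bs & all (@reduced N) ts].
Proof.
elim: ts v bs => [|t ts IHts] [|x v] [|b bs] //= [/IHts ->].
rewrite /inRTb !eqseq_cons.
by case: (reduced t) (root_color t == x) (leaves t == b) => [] [] []; rewrite ?andbF.
Qed.

Definition node_enum (E : 'I_N -> seq 'I_N -> seq tree) c u : seq tree :=
  flatten [seq flatten [seq [seq Node c ts | ts <- cart [seq E p.1 p.2 | p <- zip v bs]]
                       | v : (size bs).-tuple 'I_N]
          | bs <- interval_partitions u & 1 < size bs].

(* [n] is fuel: [enum_rt n c u] enumerates RT_u^c once [size u <= n] (mem_enum_rt). *)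
Fixpoint enum_rt n c u : seq tree :=
  if n is n'.+1 then
    if u is [:: x] then (if x == c then [:: Node c [::]] else [::])
    else node_enum (enum_rt n') c u
  else [::].

Lemma enum_rt_node n c u : size u != 1 -> enum_rt n.+1 c u = node_enum (enum_rt n) c u.
Proof. by case: u => [|x [|y u]]. Qed.

Definition children t : seq tree := let: Node _ ts := t in ts.

Section NodeEnum.
Variables (E : 'I_N -> seq 'I_N -> seq tree) (c : 'I_N) (u : seq 'I_N).
Hypothesis mem_E :
  forall c' b t', (size b < size u)%N -> (t' \in E c' b) = inRTb c' b t'.

Lemma mem_cart_children bs (v : seq 'I_N) ts :
  bs \in interval_partitions u -> (1 < size bs)%N -> size v = size bs ->
  (ts \in cart [seq E p.1 p.2 | p <- zip v bs]) =
  [&& map (@root_color N) ts == v, map (@leaves N) ts == bs & all (@reduced N) ts].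
Proof.
move=> bs_ip bs_gt1 size_v.
rewrite mem_cart all2_map_r -all2_inRTb_zip //.
apply: eq_in_all2 => t p /mem_zip_r p_bs; apply: mem_E.
exact: size_block_lt p_bs.
Qed.

Lemma mem_node_enum t : size u != 1 -> (t \in node_enum E c u) = inRTb c u t.
Proof.
move=> size_u; apply/idP/idP.
  case/flatten_mapP=> bs; rewrite mem_filter => /andP [bs_gt1 bs_ip].
  case/flatten_mapP=> v _ /mapP [ts]; rewrite mem_cart_children ?size_tuple //.
  case/and3P=> _ /eqP leaves_ts reduced_ts ->.
  move: bs_ip bs_gt1; rewrite mem_interval_partitions -leaves_ts size_map.
  by case: ts {leaves_ts} reduced_ts => // t1 ts1 reduced_ts /andP [flat_ts _] ts_gt1;
     rewrite inRTb_node eqxx ts_gt1 reduced_ts.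
case: t => c' [|t' ts].
  by rewrite inRTb_leaf => /andP [_ /eqP u_leaf]; rewrite u_leaf in size_u.
rewrite inRTb_node => /and4P [/eqP -> ts_gt1 reduced_ts flat_ts].
have bs_ip : map (@leaves N) (t' :: ts) \in interval_partitions u.
  by rewrite mem_interval_partitions flat_ts leaves_nil_all.
have size_roots : size (map (@root_color N) (t' :: ts)) == size (map (@leaves N) (t' :: ts)).
  by rewrite !size_map.
apply/flatten_mapP; exists (map (@leaves N) (t' :: ts)).
  by rewrite mem_filter size_map ts_gt1.
apply/flatten_mapP; exists (Tuple size_roots); first by rewrite mem_enum.
by apply: map_f; rewrite mem_cart_children //= ?size_map ?eqxx.
Qed.

Hypothesis E_uniq : forall c' b, (size b < size u)%N -> uniq (E c' b).

Lemma node_enum_uniq : uniq (node_enum E c u).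
Proof.
apply: (@uniq_flatten_map_key _ _ _ _ _ id (fun t => map (@leaves N) (children t))).
- by rewrite map_id filter_uniq // interval_partitions_uniq.
- move=> bs; rewrite mem_filter => /andP [bs_gt1 bs_ip].
  apply: (@uniq_flatten_map_key _ _ _ _ _ val (fun t => map (@root_color N) (children t))).
  + by rewrite map_inj_uniq ?enum_uniq //; apply: val_inj.
  + move=> v _; rewrite map_inj_uniq; last by move=> ts ts' [].
    apply: cart_uniq; apply/allP => _ /mapP [p /mem_zip_r p_bs ->].
    exact/E_uniq/(size_block_lt bs_ip).
  + move=> v _ z /mapP [ts]; rewrite mem_cart_children ?size_tuple //.
    by case/and3P=> /eqP roots_ts _ _ ->.
- move=> bs; rewrite mem_filter => /andP [bs_gt1 bs_ip] z /flatten_mapP [v _ /mapP [ts]].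
  by rewrite mem_cart_children ?size_tuple // => /and3P [_ /eqP leaves_ts _] ->.
Qed.

End NodeEnum.

Lemma mem_enum_rt n c u t : (size u <= n)%N -> (t \in enum_rt n c u) = inRTb c u t.
Proof.
elim: n c u t => [|n IHn] c u t.
  by rewrite leqn0 size_eq0 /inRTb => /eqP ->; rewrite (negbTE (leaves_nil t)) !andbF.
move=> size_u; have [|size_u1] := eqVneq (size u) 1; last first.
  rewrite enum_rt_node // mem_node_enum // => c' b t' size_b.
  by apply: IHn; rewrite -ltnS (leq_trans size_b).
case: u size_u => [|x [|y u]] //= _ _.
apply/idP/idP => [|/and3P [reduced_t /eqP root_t /eqP leaves_t]].
  by case: eqP => [<-|]; rewrite ?inE // => /eqP ->; rewrite /inRTb /= !eqxx.
case: t reduced_t root_t leaves_t => c' [|t ts] /=.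
  by move=> _ -> [->]; rewrite eqxx mem_head.
case/andP=> ts_gt1 /andP [_ _] _ leaves_ts.
have := size_flatten_ge (leaves_nil_all (t :: ts)).
by rewrite /= leaves_ts size_map; case: ts ts_gt1 {leaves_ts}.
Qed.

Lemma enum_rt_uniq n c u : (size u <= n)%N -> uniq (enum_rt n c u).
Proof.
elim: n c u => [|n IHn] c u size_u //.
have [|size_u1] := eqVneq (size u) 1; last first.
  rewrite enum_rt_node //; apply: node_enum_uniq => [c' b t'|c' b] size_b.
    by apply: mem_enum_rt; rewrite -ltnS (leq_trans size_b).
  by apply: IHn; rewrite -ltnS (leq_trans size_b).
by case: u size_u => [|x [|y u]] // _ _ /=; case: ifP.
Qed.

Lemma enum_rt_perm n c u : (size u <= n)%N -> perm_eq (enum_rt n c u) (enum_rt (size u) c u).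
Proof.
move=> size_u; apply: uniq_perm; rewrite ?enum_rt_uniq // => t.
by rewrite !mem_enum_rt.
Qed.

End ReducedTrees.

Local Open Scope ring_scope.

(** * Series in the generators *)

Section Series.
Variables (N : nat) (K : comPzRingType).
Local Notation Hel := (Hel N K).
Local Notation monomial := (monomial N).
Local Notation ET := (ET N K).
Local Notation Hone := (@Hone N K).
Implicit Types (f g h : Hel) (a b w : monomial).

Definition Hzero : Hel := fun=> 0.
Definition Hadd f g : Hel := fun w => f w + g w.
Definition Hscale (c : K) f : Hel := fun w => c * f w.
Definition Hsum (X : Type) (s : seq X) (F : X -> Hel) : Hel :=
  fun w => \sum_(x <- s) F x w.
Definition Hshift f (x : gen N) : Hel := fun w => f (x :: w).
Definition Hprod (fs : seq Hel) : Hel := foldr (@Hmul N K) Hone fs.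

Lemma HsumE (X : Type) (s : seq X) (F : X -> Hel) w :
  Hsum s F w = \sum_(x <- s) F x w.
Proof. by []. Qed.

Lemma Hmul_nil f g : Hmul f g [::] = f [::] * g [::].
Proof. by rewrite /Hmul big_ord_recl big_ord0 addr0. Qed.

Lemma Hmul_cons f g x w :
  Hmul f g (x :: w) = f [::] * g (x :: w) + Hmul (Hshift f x) g w.
Proof. by rewrite /Hmul big_ord_recl. Qed.

Lemma Hmul0l g : Hmul Hzero g = Hzero.
Proof. by apply: funext => w; rewrite /Hmul big1 // => k _; rewrite mul0r. Qed.

Lemma HmulDl f1 f2 g : Hmul (Hadd f1 f2) g = Hadd (Hmul f1 g) (Hmul f2 g).
Proof.
by apply: funext => w; rewrite /Hmul /Hadd -big_split; apply: eq_bigr => k _; rewrite mulrDl.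
Qed.

Lemma HmulZl c f g : Hmul (Hscale c f) g = Hscale c (Hmul f g).
Proof.
by apply: funext => w; rewrite /Hmul /Hscale mulr_sumr; apply: eq_bigr => k _; rewrite mulrA.
Qed.

Lemma HmulZr c f g : Hmul f (Hscale c g) = Hscale c (Hmul f g).
Proof.
by apply: funext => w; rewrite /Hmul /Hscale mulr_sumr; apply: eq_bigr => k _; rewrite mulrCA.
Qed.

Lemma Hmul_suml (X : Type) (s : seq X) (F : X -> Hel) g :
  Hmul (Hsum s F) g = Hsum s (fun x => Hmul (F x) g).
Proof.
apply: funext => w; rewrite /Hmul /Hsum; under eq_bigr do rewrite mulr_suml.
exact: exchange_big.
Qed.

Lemma Hmul_sumr (X : Type) (s : seq X) f (G : X -> Hel) :
  Hmul f (Hsum s G) = Hsum s (fun x => Hmul f (G x)).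
Proof.
apply: funext => w; rewrite /Hmul /Hsum; under eq_bigr do rewrite mulr_sumr.
exact: exchange_big.
Qed.

Lemma Hshift_mul f g x :
  Hshift (Hmul f g) x = Hadd (Hscale (f [::]) (Hshift g x)) (Hmul (Hshift f x) g).
Proof. by apply: funext => w; rewrite /Hshift Hmul_cons. Qed.

Lemma HmulA f g h : Hmul (Hmul f g) h = Hmul f (Hmul g h).
Proof.
apply: funext => w; elim: w f g h => [|x w IHw] f g h; first by rewrite !Hmul_nil mulrA.
rewrite !Hmul_cons !Hmul_nil Hshift_mul HmulDl HmulZl /Hadd /Hscale IHw.
by rewrite mulrDr mulrA addrA.
Qed.

Lemma Hmul1l f : Hmul Hone f = f.
Proof.
apply: funext => -[|x w]; first by rewrite Hmul_nil mul1r.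
rewrite Hmul_cons.
have -> : Hshift Hone x = Hzero by [].
by rewrite Hmul0l mul1r addr0.
Qed.

Lemma Hmul1r f : Hmul f Hone = f.
Proof.
apply: funext => w; elim: w f => [|x w IHw] f; first by rewrite Hmul_nil mulr1.
by rewrite Hmul_cons IHw mulr0 add0r.
Qed.

Lemma Hmono_nil : Hmono K [::] = Hone.
Proof. by []. Qed.

Lemma Hmul_monol a g w :
  Hmul (Hmono K a) g w = if take (size a) w == a then g (drop (size a) w) else 0.
Proof.
elim: a w g => [|x a IHa] w g; first by rewrite Hmono_nil Hmul1l take0 drop0 eqxx.
case: w => [|y w]; first by rewrite Hmul_nil mul0r.
rewrite Hmul_cons mul0r add0r /= eqseq_cons.
have [->|neq_yx] := eqVneq y x.
  have -> : Hshift (Hmono K (x :: a)) x = Hmono K a.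
    by apply: funext => v; rewrite /Hshift /Hmono eqseq_cons eqxx.
  exact: IHa.
have -> : Hshift (Hmono K (x :: a)) y = Hzero.
  by apply: funext => v; rewrite /Hshift /Hmono eqseq_cons (negbTE neq_yx).
by rewrite Hmul0l.
Qed.

Lemma Hmul_mono a b : Hmul (Hmono K a) (Hmono K b) = Hmono K (a ++ b).
Proof.
apply: funext => w; rewrite Hmul_monol /Hmono.
have [take_a|take_a] := eqVneq (take (size a) w) a.
  by rewrite -[in RHS](cat_take_drop (size a) w) take_a eqseq_cat // eqxx.
case: eqP => // w_ab.
by case/eqP: take_a; rewrite w_ab take_size_cat.
Qed.

Lemma Hprod_cat (fs1 fs2 : seq Hel) : Hprod (fs1 ++ fs2) = Hmul (Hprod fs1) (Hprod fs2).
Proof. by elim: fs1 => [|f fs1 IHfs] /=; rewrite ?Hmul1l // IHfs HmulA. Qed.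

Lemma ETvalE (l : ET) : ETval l = Hsum l (fun x => Hscale x.1 (Hmono K x.2)).
Proof. by apply: funext => w; apply: eq_bigr => x _; rewrite /Hscale /Hmono eq_sym. Qed.

Lemma ETval_mul (A B : ET) : ETval (ETmul A B) = Hmul (ETval A) (ETval B).
Proof.
rewrite !ETvalE Hmul_suml; apply: funext => w.
rewrite /Hsum /ETmul big_allpairs_dep /=; apply: eq_bigr => x _.
rewrite Hmul_sumr /Hsum; apply: eq_bigr => y _.
by rewrite HmulZl HmulZr Hmul_mono /Hscale mulrA.
Qed.

Lemma ETval0 : ETval [::] = Hzero.
Proof. by apply: funext => w; rewrite /ETval big_nil. Qed.

Lemma ETval1 : ETval [:: (1, [::])] = Hone.
Proof. by apply: funext => w; rewrite /ETval big_seq1 mul1r /Hone eq_sym. Qed.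

Lemma ETval_prod (Ls : seq ET) : ETval (ETprod Ls) = Hprod (map (@ETval N K) Ls).
Proof. by elim: Ls => [|L Ls IHLs] /=; rewrite ?ETval1 // ETval_mul IHLs. Qed.

Lemma Hsum_scale (X : Type) (s : seq X) (a : K) (F : X -> Hel) :
  Hsum s (fun x => Hscale a (F x)) = Hscale a (Hsum s F).
Proof. by apply: funext => w; rewrite /Hscale !HsumE mulr_sumr. Qed.

Lemma eq_in_Hsum (X : eqType) (s : seq X) (F G : X -> Hel) :
  {in s, F =1 G} -> Hsum s F = Hsum s G.
Proof.
move=> eqFG; apply: funext => w; rewrite !HsumE big_seq_cond [RHS]big_seq_cond.
by apply: eq_bigr => x /andP [/eqFG ->].
Qed.

Lemma Hprod_sum_cart (X : Type) (F : X -> Hel) (Ls : seq (seq X)) :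
  Hsum (cart Ls) (fun xs => Hprod (rev (map F xs))) = Hprod (rev (map (fun L => Hsum L F) Ls)).
Proof.
elim: Ls => [|L Ls IHLs].
  by apply: funext => w; rewrite HsumE big_seq1.
rewrite /= rev_cons -cats1 Hprod_cat /= Hmul1r -IHLs Hmul_suml.
apply: funext => w; rewrite !HsumE big_allpairs_dep /= exchange_big; apply: eq_bigr => xs _.
rewrite Hmul_sumr HsumE; apply: eq_bigr => x _.
by rewrite rev_cons -cats1 Hprod_cat /= Hmul1r.
Qed.

Lemma Hprod_scale (X : Type) (a : X -> K) (F : X -> Hel) (s : seq X) :
  Hprod (map (fun x => Hscale (a x) (F x)) s) = Hscale (\prod_(x <- s) a x) (Hprod (map F s)).
Proof.
elim: s => [|x s IHs] /=; first by apply: funext => w; rewrite big_nil /Hscale mul1r.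
by rewrite IHs HmulZl HmulZr big_cons; apply: funext => w; rewrite /Hscale mulrA.
Qed.

End Series.

Arguments Hzero {N K}.

(** * Signed tree sums *)

Section TreeSums.
Variables (N : nat) (K : comPzRingType).
Local Notation Hel := (Hel N K).
Local Notation tree := (tree N).
Local Notation Hone := (@Hone N K).
Implicit Types (c : 'I_N) (u : seq 'I_N) (t : tree) (ts : seq tree).

Definition signed_Lambda t : Hel := Hscale ((-1) ^+ nvert t) (ETval (Lambda K t)).

Definition signed_tree_sum (L : seq tree) : Hel := Hsum L signed_Lambda.

Definition tree_sum c u : Hel := signed_tree_sum (enum_rt (size u) c u).

Lemma tree_sum_fuel n c u : (size u <= n)%N -> tree_sum c u = signed_tree_sum (enum_rt n c u).
Proof.
move=> size_u; apply: funext => w; rewrite /tree_sum /signed_tree_sum !HsumE; apply: perm_big.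
by rewrite perm_sym enum_rt_perm.
Qed.

Lemma signed_Lambda_node c t ts :
  signed_Lambda (Node c (t :: ts)) =
  Hscale (-1) (Hmul (ETval (Yterms K c (map (@root_color N) (t :: ts))))
                    (Hprod (rev (map signed_Lambda (t :: ts))))).
Proof.
set ts' := t :: ts; rewrite /signed_Lambda.
have -> : nvert (Node c ts') = (sumn (map (@nvert N) ts')).+1 by [].
have -> : Lambda K (Node c ts') =
    ETmul (Yterms K c (map (@root_color N) ts')) (ETprod (rev (map (Lambda K) ts'))) by [].
rewrite ETval_mul ETval_prod -!map_rev -map_comp Hprod_scale HmulZr.
rewrite big_rev prodrXr -(big_map _ xpredT id) -sumnE exprS; apply: funext => w.
by rewrite /Hscale mulrA.
Qed.

Lemma signed_tree_sum_nodes c (v : seq 'I_N) Ls :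
  (1 < size v)%N -> {in cart Ls, forall ts, map (@root_color N) ts = v} ->
  signed_tree_sum [seq Node c ts | ts <- cart Ls] =
  Hscale (-1) (Hmul (ETval (Yterms K c v)) (Hprod (rev (map signed_tree_sum Ls)))).
Proof.
move=> v_gt1 roots_Ls; rewrite -Hprod_sum_cart Hmul_sumr -Hsum_scale.
have -> : signed_tree_sum [seq Node c ts | ts <- cart Ls] =
    Hsum (cart Ls) (fun ts => signed_Lambda (Node c ts)).
  by apply: funext => w; rewrite /signed_tree_sum !HsumE big_map.
apply: eq_in_Hsum => -[|t ts] /roots_Ls roots_ts; first by rewrite -roots_ts in v_gt1.
by rewrite signed_Lambda_node roots_ts.
Qed.

Definition split_term (G : 'I_N -> seq 'I_N -> Hel) c (bs : seq (seq 'I_N)) (v : seq 'I_N) :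
    Hel :=
  Hmul (ETval (Yterms K c v)) (Hprod (rev [seq G p.1 p.2 | p <- zip v bs])).

Lemma Yterms1 c x : Yterms K c [:: x] = if x == c then [:: (1, [::])] else [::].
Proof. by rewrite /Yterms insubF // eqseq_cons andbT. Qed.

Lemma sum_split_term1 (G : 'I_N -> seq 'I_N -> Hel) c b w :
  \sum_(v : (size [:: b]).-tuple 'I_N) split_term G c [:: b] v w = G c b w.
Proof.
rewrite (bigD1 [tuple c]) //= big1 ?addr0 => [|v v_c].
  by rewrite /split_term /= Yterms1 eqxx ETval1 Hmul1l Hmul1r.
case: v v_c => -[|x [|y v]] //= size_v v_c.
have x_c : x != c by apply: contraNneq v_c => x_c; apply/eqP/val_inj; rewrite /= x_c.
by rewrite /split_term /= Yterms1 (negbTE x_c) ETval0 Hmul0l.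
Qed.

Lemma tree_sum_rec c u w : (1 < size u)%N ->
  tree_sum c u w = - \sum_(bs <- interval_partitions u | (1 < size bs)%N)
                       \sum_(v : (size bs).-tuple 'I_N) split_term tree_sum c bs v w.
Proof.
move=> u_gt1; have [n size_u] : exists n, size u = n.+1.
  by exists (size u).-1; rewrite prednK // ltnW.
have mem_E c' b t : (size b < size u)%N -> (t \in enum_rt n c' b) = inRTb c' b t.
  by rewrite size_u ltnS; apply: mem_enum_rt.
have size_u1 : size u != 1 by rewrite neq_ltn u_gt1 orbT.
rewrite {1}/tree_sum {1}size_u enum_rt_node //.
rewrite /signed_tree_sum HsumE big_flatten big_map big_filter -sumrN /=.
rewrite big_seq_cond [RHS]big_seq_cond; apply: eq_bigr => bs /andP [bs_ip bs_gt1].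
rewrite big_flatten big_map big_enum -sumrN /=; apply: eq_bigr => v _.
rewrite -HsumE -/(signed_tree_sum _) (@signed_tree_sum_nodes c v) ?size_tuple //; last first.
  by move=> ts; rewrite (mem_cart_children mem_E) ?size_tuple // => /and3P [/eqP].
rewrite /Hscale mulN1r /split_term -map_comp; congr (- Hmul _ (Hprod (rev _)) w).
apply/eq_in_map => p /mem_zip_r p_bs /=; symmetry; apply: tree_sum_fuel.
by rewrite -ltnS -size_u (size_block_lt bs_ip).
Qed.

End TreeSums.

(** * The antipode identity *)

Section IdConvolution.
Variables (N : nat) (K : comPzRingType).
Local Notation Hel := (Hel N K).
Local Notation monomial := (monomial N).
Local Notation ET := (ET N K).
Local Notation TT := (TT N K).
Local Notation Hone := (@Hone N K).
Implicit Types (S : monomial -> Hel) (s t : TT) (A B X Y : ET).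

Definition lin_ext S X : Hel := Hsum X (fun x => Hscale x.1 (S x.2)).

(* m o (id (x) S) o flip; on s = Delta m it is the left side of the second identity of
   is_antipode_L. *)
Definition id_conv S s : Hel := Hsum s (fun x => Hscale x.1.1 (Hmul (Hmono K x.2) (S x.1.2))).

Lemma id_conv_pairs S X Y :
  id_conv S [seq (x.1 * y.1, x.2, y.2) | x <- X, y <- Y] = Hmul (ETval Y) (lin_ext S X).
Proof.
apply: funext => w; rewrite /id_conv HsumE big_allpairs_dep ETvalE Hmul_suml HsumE exchange_big.
apply: eq_bigr => y _; rewrite HmulZl /lin_ext Hmul_sumr /Hscale HsumE mulr_sumr.
by apply: eq_bigr => x _; rewrite HmulZr /Hscale /= mulrCA mulrA.
Qed.

Lemma id_conv_flatten S (ss : seq TT) : id_conv S (flatten ss) = Hsum ss (id_conv S).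
Proof. by apply: funext => w; rewrite /id_conv !HsumE big_flatten. Qed.

Section AntiMultiplicative.
Variable S : monomial -> Hel.
Hypothesis S_nil : S [::] = Hone.
Hypothesis S_cat : forall a b, S (a ++ b) = Hmul (S b) (S a).

Lemma lin_ext_mul A B : lin_ext S (ETmul A B) = Hmul (lin_ext S B) (lin_ext S A).
Proof.
apply: funext => w; rewrite /lin_ext HsumE big_allpairs_dep Hmul_suml HsumE exchange_big.
apply: eq_bigr => x _; rewrite Hmul_sumr HsumE; apply: eq_bigr => y _.
by rewrite /= S_cat HmulZl HmulZr /Hscale mulrCA mulrA.
Qed.

Lemma lin_ext1 : lin_ext S [:: (1, [::])] = Hone.
Proof. by apply: funext => w; rewrite /lin_ext HsumE big_seq1 /Hscale S_nil mul1r. Qed.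

Lemma lin_ext_prod (Ls : seq ET) : lin_ext S (ETprod Ls) = Hprod (rev (map (lin_ext S) Ls)).
Proof.
elim: Ls => [|L Ls IHLs]; first exact: lin_ext1.
by rewrite /= lin_ext_mul IHLs rev_cons -cats1 Hprod_cat /= Hmul1r.
Qed.

Lemma id_conv_mul s t e :
  id_conv S t = Hscale e Hone -> id_conv S (TTmul s t) = Hscale e (id_conv S s).
Proof.
move=> conv_t; apply: funext => w.
rewrite /id_conv /TTmul HsumE big_allpairs_dep /Hscale HsumE mulr_sumr; apply: eq_bigr => x _.
have : Hmul (Hmono K x.2) (Hmul (id_conv S t) (S x.1.2)) w = e * Hmul (Hmono K x.2) (S x.1.2) w.
  by rewrite conv_t HmulZl Hmul1l HmulZr.
rewrite /id_conv Hmul_suml Hmul_sumr HsumE => conv_x.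
rewrite mulrCA -conv_x mulr_sumr; apply: eq_bigr => y _ /=.
by rewrite HmulZl HmulZr -Hmul_mono S_cat !HmulA /Hscale mulrA.
Qed.

End AntiMultiplicative.
End IdConvolution.

Section TreeAntipode.
Variables (N : nat) (K : comPzRingType).
Local Notation Hel := (Hel N K).
Local Notation monomial := (monomial N).
Local Notation Hone := (@Hone N K).

Definition tree_antipode (m : monomial) : Hel :=
  Hprod (rev [seq tree_sum K (val g).1 (val g).2 | g <- m]).

Lemma tree_antipode_cat a b :
  tree_antipode (a ++ b) = Hmul (tree_antipode b) (tree_antipode a).
Proof. by rewrite /tree_antipode map_cat rev_cat Hprod_cat. Qed.

Lemma tree_sum1 c x : tree_sum K c [:: x] = if x == c then Hone else Hzero.
Proof.
apply: funext => w; rewrite /tree_sum /signed_tree_sum HsumE /=.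
case: eqP => _; last by rewrite big_nil.
by rewrite big_seq1 /signed_Lambda /Hscale /= ETval1 mul1r.
Qed.

Lemma lin_ext_Yterms c b : b != [::] -> lin_ext tree_antipode (Yterms K c b) = tree_sum K c b.
Proof.
move=> b_nil; rewrite /Yterms; case: insubP => [g _ val_g|b_le1].
  apply: funext => w; rewrite /lin_ext HsumE big_seq1 /Hscale mul1r /tree_antipode /=.
  by rewrite Hmul1r val_g.
case: b b_nil b_le1 => [|x [|y b]] // _ _; rewrite tree_sum1 eqseq_cons andbT.
case: eqP => _; first exact: lin_ext1.
by apply: funext => w; rewrite /lin_ext HsumE big_nil.
Qed.

Lemma id_conv_Delta_gen_split (g : gen N) w :
  id_conv tree_antipode (Delta_gen K g) w =
  \sum_(bs <- interval_partitions (val g).2)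
     \sum_(v : (size bs).-tuple 'I_N) split_term (tree_sum K) (val g).1 bs v w.
Proof.
rewrite /Delta_gen id_conv_flatten HsumE big_map; apply: eq_big_seq => bs bs_ip.
rewrite id_conv_flatten HsumE big_map big_enum /=; apply: eq_bigr => v _.
rewrite id_conv_pairs (lin_ext_prod (erefl _) tree_antipode_cat).
rewrite -map_comp; congr (Hmul _ (Hprod (rev _)) w); apply/eq_in_map => p /mem_zip_r p_bs /=.
apply: lin_ext_Yterms; move: bs_ip; rewrite mem_interval_partitions => /andP [_ /allP].
exact.
Qed.

Lemma id_conv_Delta_gen (g : gen N) : id_conv tree_antipode (Delta_gen K g) = Hzero.
Proof.
apply: funext => w; rewrite id_conv_Delta_gen_split.
case: g => -[i u] /= u_gt1; have u_nil : u != [::] by case: u u_gt1.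
rewrite (bigID (fun bs => 1 < size bs)%N) /= -[X in X + _]opprK -tree_sum_rec //.
by rewrite -big_filter interval_partitions_single // big_seq1 sum_split_term1 addNr.
Qed.

Lemma id_conv_Delta m : id_conv tree_antipode (Delta K m) = Hscale (eps K m) Hone.
Proof.
elim: m => [|g m IHm].
  by apply: funext => w; rewrite /id_conv HsumE big_seq1 /Hscale /= Hmono_nil Hmul1l /eps !mul1r.
rewrite [Delta K _]/= (id_conv_mul tree_antipode_cat _ IHm) id_conv_Delta_gen.
by apply: funext => w; rewrite /Hscale /eps /= !mul0r mulr0.
Qed.

End TreeAntipode.

(** * Uniqueness of the antipode *)

Section RightCounit.
Variables (N : nat) (K : comPzRingType).
Local Notation monomial := (monomial N).
Local Notation ET := (ET N K).
Local Notation TT := (TT N K).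

Lemma filter_Yterms (c : 'I_N) (v : seq 'I_N) :
  [seq y <- Yterms K c v | y.2 == [::]] = if v == [:: c] then [:: (1, [::])] else [::].
Proof.
rewrite /Yterms; case: insubP => [g u_gt1 _|_] /=; last by case: ifP.
by case: v u_gt1 => [|x [|y v]] //= _; rewrite eqseq_cons andbF.
Qed.

Lemma filter_pairs (X Y : ET) :
  [seq z <- [seq (x.1 * y.1, x.2, y.2) | x <- X, y <- Y] | z.2 == [::]] =
  [seq (x.1 * y.1, x.2, y.2) | x <- X, y <- [seq y <- Y | y.2 == [::]]].
Proof. by elim: X => [|x X IHX] //=; rewrite filter_cat IHX filter_map. Qed.

Lemma filter_TTmul (s t : TT) :
  [seq z <- TTmul s t | z.2 == [::]] =
  TTmul [seq z <- s | z.2 == [::]] [seq z <- t | z.2 == [::]].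
Proof.
elim: s => [|x s IHs] //=; rewrite filter_cat IHs filter_map /=.
case: (eqVneq x.2 [::]) => [x_nil|x_nil] /=.
  by congr (map _ _ ++ _); apply: eq_filter => y /=; rewrite x_nil.
rewrite (@eq_filter _ _ pred0) ?filter_pred0 // => y /=.
by rewrite -size_eq0 size_cat addn_eq0 size_eq0 (negbTE x_nil).
Qed.

Lemma filter_Delta_gen (g : gen N) :
  [seq z <- Delta_gen K g | z.2 == [::]] = [:: (1, [:: g], [::])].
Proof.
case: g => -[i u] u_gt1; rewrite /Delta_gen /= filter_flatten -map_comp.
have u_ip : [:: u] \in interval_partitions u.
  by rewrite mem_interval_partitions /= cats0 eqxx; case: u u_gt1.
have filter_v bs (v : (size bs).-tuple 'I_N) (X := ETprod [seq Yterms K p.1 p.2 | p <- zip v bs]) :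
    [seq z <- [seq (x.1 * y.1, x.2, y.2) | x <- X, y <- Yterms K i v] | z.2 == [::]] =
    if val v == [:: i] then [seq (x.1 * 1, x.2, [::]) | x <- X] else [::].
  by rewrite filter_pairs filter_Yterms; case: ifP => _; rewrite ?allpairs0r ?allpairs1r.
rewrite (flatten_map_only (interval_partitions_uniq u) u_ip) /=; last first.
  move=> bs bs_ip bs_u; rewrite filter_flatten -map_comp flatten_map_nil // => v _ /=.
  rewrite filter_v; case: eqP => // v_i; case/eqP: bs_u.
  have size_bs : size bs = 1 by rewrite -(size_tuple v) v_i.
  move: bs_ip; rewrite mem_interval_partitions.
  by case: bs size_bs {v v_i} => [|b []] //= _ /andP [/eqP]; rewrite cats0 => ->.
rewrite filter_flatten -map_comp (eq_map (filter_v [:: u])).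
rewrite (flatten_map_only (enum_uniq _) (mem_enum _ [tuple i])) /=.
  by rewrite eqxx /Yterms insubT /= !mulr1.
move=> v _ v_i; case: eqP => // val_v; case/eqP: v_i.
exact: val_inj.
Qed.

Lemma filter_Delta (m : monomial) : [seq t <- Delta K m | t.2 == [::]] = [:: (1, m, [::])].
Proof.
elim: m => [|g m IHm] //; rewrite [Delta K _]/= filter_TTmul -/(Delta K m) IHm filter_Delta_gen.
by rewrite /TTmul /= mulr1.
Qed.

End RightCounit.

Section Weight.
Variables (N : nat) (K : comPzRingType).
Local Notation monomial := (monomial N).

(* Y_u^i has weight |u| - 1; the left factor of every term of Delta m other than m (x) 1
   is lighter than m. *)
Definition weight (m : monomial) : nat := sumn [seq (size (val g).2).-1 | g <- m].

Lemma weight_cat a b : weight (a ++ b) = (weight a + weight b)%N.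
Proof. by rewrite /weight map_cat sumn_cat. Qed.

Lemma weight_Yterms (c : 'I_N) b y : b != [::] -> y \in Yterms K c b -> (weight y.2).+1 = size b.
Proof.
move=> b_nil; rewrite /Yterms; case: insubP => [g _ val_g|_].
  by rewrite inE => /eqP -> /=; rewrite /weight /= val_g addn0 prednK // lt0n size_eq0.
by case: ifP => [/eqP -> |_]; rewrite ?inE // => /eqP ->.
Qed.

Lemma weight_ETprod bs (v : seq 'I_N) x :
  size v = size bs -> all (fun b => b != [::]) bs ->
  x \in ETprod [seq Yterms K p.1 p.2 | p <- zip v bs] ->
  (weight x.2 + size bs)%N = size (flatten bs).
Proof.
elim: bs v x => [|b bs IHbs] [|c v] x //=; first by rewrite inE => _ _ /eqP ->.
case=> /IHbs IHv /andP [b_nil /IHv {}IHv] /allpairsP [[y z] [y_Y z_prod ->]] /=.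
by rewrite weight_cat size_cat -(weight_Yterms b_nil y_Y) -(IHv _ z_prod) addnS addSn addnA.
Qed.

Lemma Yterms_size_gt1 (c : 'I_N) v y : y \in Yterms K c v -> y.2 != [::] -> (1 < size v)%N.
Proof. by rewrite /Yterms; case: insubP => // _; case: ifP => _; rewrite ?inE // => /eqP ->. Qed.

Lemma weight_Delta_gen (g : gen N) t :
  t \in Delta_gen K g -> (weight t.1.2 + (t.2 != [::]) <= weight [:: g])%N.
Proof.
case: g => -[i u] u_gt1; rewrite /weight /= addn0 -/(weight _) /Delta_gen /=.
case/flatten_mapP=> bs; rewrite mem_interval_partitions => /andP [/eqP flat_bs bs_nil].
case/flatten_mapP=> v _ /allpairsP [[x y] [x_prod y_Y ->]] /=.
have := weight_ETprod (size_tuple v) bs_nil x_prod; rewrite flat_bs.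
have := Yterms_size_gt1 y_Y; rewrite size_tuple.
have : (0 < size bs)%N.
  by case: bs flat_bs {bs_nil x_prod v y_Y} => // flat; rewrite -flat in u_gt1.
rewrite /= -subn1 => bs_gt0 bs_gt1 <-; rewrite -addnBA // leq_add2l.
by case: (y.2 != [::]) bs_gt1 => [/(_ isT)|_]; rewrite ?subn_gt0.
Qed.

Lemma weight_Delta m t : t \in Delta K m -> (weight t.1.2 + (t.2 != [::]) <= weight m)%N.
Proof.
elim: m t => [|g m IHm] t; first by rewrite inE => /eqP ->.
rewrite [Delta K _]/= => /allpairsP [[x y] [/weight_Delta_gen x_g /IHm y_m ->]] /=.
rewrite weight_cat (weight_cat [:: g] m); apply: leq_trans (leq_add x_g y_m).
by rewrite addnACA leq_add2l; case: x.2 => [|? ?]; case: y.2.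
Qed.

End Weight.

Section RightAntipodeUnique.
Variables (N : nat) (K : comPzRingType).
Local Notation Hel := (Hel N K).
Local Notation monomial := (monomial N).

Lemma id_conv_DeltaE (S : monomial -> Hel) m w :
  id_conv S (Delta K m) w =
  S m w + \sum_(t <- Delta K m | t.2 != [::]) t.1.1 * Hmul (Hmono K t.2) (S t.1.2) w.
Proof.
rewrite /id_conv HsumE (bigID (fun t => t.2 == [::])) /= -big_filter filter_Delta.
by rewrite big_seq1 /Hscale /= Hmono_nil Hmul1l mul1r.
Qed.

Lemma id_conv_Delta_inj (S1 S2 : monomial -> Hel) :
  (forall m, id_conv S1 (Delta K m) = id_conv S2 (Delta K m)) -> S1 = S2.
Proof.
move=> eq_conv; apply: funext => m.
elim: {m}(weight m).+1 {-2}m (ltnSn (weight m)) => // n IHn m weight_m.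
apply: funext => w; apply: (@addIr _ (\sum_(t <- Delta K m | t.2 != [::])
                                         t.1.1 * Hmul (Hmono K t.2) (S2 t.1.2) w)).
rewrite -id_conv_DeltaE -eq_conv id_conv_DeltaE; congr (_ + _).
rewrite big_seq_cond [RHS]big_seq_cond; apply: eq_bigr => t /andP [t_Delta t_nil].
rewrite IHn // -ltnS (leq_trans _ weight_m) // ltnS.
by have := weight_Delta t_Delta; rewrite t_nil addn1.
Qed.

End RightAntipodeUnique.

Lemma In_mem (T : eqType) (x : T) (s : seq T) : List.In x s <-> x \in s.
Proof.
elim: s => [|y s IHs] //=; rewrite inE IHs.
by split=> [[->|xs]|/orP [/eqP|]]; [rewrite eqxx | rewrite xs orbT | left | right].
Qed.

Lemma NoDup_uniq (T : eqType) (s : seq T) : List.NoDup s -> uniq s.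
Proof.
elim: s => [|x s IHs] //= /List.NoDup_cons_iff [x_s /IHs ->].
by rewrite andbT; apply/negP => /In_mem.
Qed.

Unset Implicit Arguments.

Theorem theorem7 (R : realType) (N : nat) (HN : (0 < N)%N) (i : 'I_N)
  (u : seq 'I_N) (Hu : (2 <= size u)%N)
  (S : monomial N -> Hel N R[i]) :
  is_antipode_L S ->
  forall l : list (tree N), List.NoDup l -> (forall T, List.In T l <-> inRT i u T) ->
  forall w : monomial N,
    S [:: exist _ (i, u) Hu] w =
    \sum_(T <- l) (-1) ^+ nvert T * ETval (Lambda R[i] T) w.
Proof.
move=> S_antipode l l_uniq l_RT w.
have -> : S = tree_antipode R[i].
  apply: id_conv_Delta_inj => m; rewrite id_conv_Delta.
  by apply: funext => w'; case: (S_antipode m w').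
rewrite /tree_antipode /= Hmul1r /tree_sum /signed_tree_sum HsumE.
apply: perm_big; apply: uniq_perm; rewrite ?enum_rt_uniq ?NoDup_uniq // => t.
by rewrite mem_enum_rt //; apply/idP/idP => [/inRTbP/l_RT/In_mem|/In_mem/l_RT/inRTbP].
Qed.
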